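(* Let $u\ge1$ and let $Z\subseteq\{0,1,\dots,u\}$ be a finite set of integers, partitioned as $Z=Z^{(1)}\cup Z^{(2)}$ with $Z^{(1)}\cap Z^{(2)}=\emptyset$. Set $\mu:=\max(Z)/u$ and assume $\mu\le1/16$. Then for every $0\le\epsilon\le1/4$, \[ \Big|\mathcal{S}\big(Z^{(1)},(1+\epsilon)\tfrac u2\big)\Big|+\Big|\mathcal{S}\big(Z^{(2)},(1+\epsilon)\tfrac u2\big)\Big|\;\le\;\frac{|\mathcal{S}(Z,u)|+1}{1-2\epsilon-4\mu}. \]
   Context: For a finite set $X$ of integers and a real $t$, $\mathcal{S}(X,t)=\{\Sigma(Y): Y\subseteq X,\ \Sigma(Y)\le t\}$, where $\Sigma(Y)=\sum_{y\in Y}y$ (so $0=\Sigma(\emptyset)\in\mathcal{S}(X,t)$ for $t\ge0$). *)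

From mathcomp Require Import all_boot all_order all_algebra.
From mathcomp Require Import finmap.
Set Implicit Arguments. Unset Strict Implicit. Unset Printing Implicit Defensive.
Import Order.TTheory GRing.Theory Num.Theory.
Local Open Scope fset_scope.

Definition fsum (Y : {fset nat}) : nat := (\sum_(y <- Y) y)%N.

Definition subset_sums (R : realFieldType) (X : {fset nat}) (t : R) : {fset nat} :=
  [fset fsum Y | Y in fpowerset X & ((fsum Y)%:R <= t)%R].

(* max Z (0 if Z empty) *)
Definition fmax (Z : {fset nat}) : nat := (\max_(z <- Z) z)%N.

From mathcomp Require Import all_boot all_order all_algebra.
From mathcomp Require Import finmap.
From mathcomp Require Import zify ring lra.
Import Order.TTheory GRing.Theory Num.Theory.

(* Write n = floor((1+eps)u/2), L = u - n, m = max Z, and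
   A = S(Z1,n), B = S(Z2,n), C = S(Z,u); since Z1, Z2 are disjoint, a sum
   from Z1 plus a sum from Z2 is a sum from Z.  Three ways of placing
   translated copies of A and B inside C give the counting bounds
   (1) |A| + |B| <= |C| + 1 + #{b in B | b > L}  (A and max A + B_{<=L}),
       and symmetrically with #{a in A | a > L};
   (2) |A| + |B| <= |C| + #{a in A | a < n + m - L}  (B and A + s with s a
       subset sum of Z2 just below L+1);
   (3) k #{a in A | a < y} + #{a in A | a > L} <= |C|  (k disjoint windows
       of width D = y + m - 1 below L+1, each holding a translate of A_{<y}).
   With delta = 2 eps + 4 mu, either one of the tails in (1) or the count in
   (2) is at most delta (|A|+|B|) (+1), which closes the inequality, or all
   are large and (3) with y = n + m - L, k = (L+1)/D gives it, because
   (k+1) delta >= 1 - eps. *)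

Definition sums_upto (X : {fset nat}) (n : nat) : {fset nat} :=
  [fset fsum Y | Y in fpowerset X & (fsum Y <= n)%N]%fset.

Section SubsetSums.
Local Open Scope fset_scope.
Local Open Scope nat_scope.
Implicit Types (X Y : {fset nat}) (n s : nat).

Lemma sums_uptoP X n s :
  reflect (exists Y, [/\ Y `<=` X, fsum Y = s & s <= n]) (s \in sums_upto X n).
Proof.
apply: (iffP idP) => [/imfsetP [Y /= /andP [YX Yn] ->]|[Y [YX <- Yn]]].
  by exists Y; split => //; rewrite -fpowersetE.
by apply/imfsetP; exists Y => //=; rewrite inE /= Yn andbT fpowersetE.
Qed.

Lemma fsum0 : fsum fset0 = 0.
Proof. by rewrite /fsum big_seq_fset0. Qed.

Lemma fsumU Y1 Y2 : Y1 `&` Y2 = fset0 -> fsum (Y1 `|` Y2) = fsum Y1 + fsum Y2.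
Proof.
move=> Y12; rewrite /fsum (big_fsetID _ (mem Y1)) /=.
congr (_ + _); apply: eq_fbigl => x; rewrite !inE /=.
  by apply/andP/idP => [[]|->] //; rewrite orTb.
case x1: (x \in Y1) => /=; last by rewrite andbT.
apply/esym/negbTE/negP => x2.
by have := in_fset0 x; rewrite -Y12 inE x1 x2.
Qed.

Lemma fsum_subset Y X : Y `<=` X -> fsum Y <= fsum X.
Proof.
move=> YX; rewrite /fsum (big_fsetID _ (mem Y) X) /=.
rewrite (_ : [fset x in X | x \in Y] = Y) ?leq_addr //.
apply/fsetP => x; rewrite !inE /=; case xY: (x \in Y); rewrite ?andbF ?andbT //.
by rewrite (fsubsetP YX).
Qed.

Lemma bound_gt0_of_fsum X m : (forall x, x \in X -> x <= m) -> 0 < fsum X -> 0 < m.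
Proof.
move=> Xm; apply: contraTT; rewrite -!eqn0Ngt => /eqP m0.
by rewrite /fsum big_seq big1 // => x /Xm; rewrite m0 leqn0 => /eqP.
Qed.

Lemma subset_sum_window {X m v} : 0 < m -> (forall x, x \in X -> x <= m) ->
  v <= fsum X -> exists2 Y, Y `<=` X & v <= fsum Y < v + m.
Proof.
move=> m_gt0; move: {2}#|` X| (erefl #|` X|) => c.
elim: c X v => [|c IH] X v cardX Xm vX.
  move: vX; rewrite (cardfs0_eq cardX) fsum0 leqn0 => /eqP ->.
  by exists fset0; rewrite ?fsum0.
have [x xX] : exists x, x \in X.
  by apply/fset0Pn; rewrite -cardfs_gt0 cardX.
have sumX : fsum X = x + fsum (X `\ x) by rewrite /fsum (big_fsetD1 x).
have cardXx : #|` X `\ x| = c by move: cardX; rewrite (cardfsD1 x) xX add1n => -[].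
have Xxm y : y \in X `\ x -> y <= m by rewrite inE => /andP [_ /Xm].
have [vXx|Xxv] := leqP v (fsum (X `\ x)).
  have [Y YXx HY] := IH _ v cardXx Xxm vXx.
  by exists Y => //; apply: fsubset_trans YXx (fsubD1set _ _).
by exists X => //; rewrite vX /= sumX; have := Xm x xX; lia.
Qed.

Lemma sums_upto0 X n : 0 \in sums_upto X n.
Proof. by apply/sums_uptoP; exists fset0; rewrite fsum0 fsub0set. Qed.

Lemma sums_upto_le {X n s} : s \in sums_upto X n -> s <= n.
Proof. by case/sums_uptoP => Y []. Qed.

Lemma sums_upto_le_fsum {X n s} : s \in sums_upto X n -> s <= fsum X.
Proof. by case/sums_uptoP => Y [YX <- _]; apply: fsum_subset. Qed.

Lemma sums_upto_sub {X X' n n'} : X `<=` X' -> n <= n' ->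
  sums_upto X n `<=` sums_upto X' n'.
Proof.
move=> XX' nn'; apply/fsubsetP => s /sums_uptoP [Y [YX <- Yn]].
apply/sums_uptoP; exists Y; split => //.
  exact: fsubset_trans XX'.
exact: leq_trans nn'.
Qed.

Lemma sums_upto_merge Z1 Z2 n Y1 Y2 : Z1 `&` Z2 = fset0 ->
  Y1 `<=` Z1 -> Y2 `<=` Z2 -> fsum Y1 + fsum Y2 <= n ->
  fsum Y1 + fsum Y2 \in sums_upto (Z1 `|` Z2) n.
Proof.
move=> Z12 YZ1 YZ2 Yn; apply/sums_uptoP; exists (Y1 `|` Y2); split => //.
  exact: fsetUSS.
apply: fsumU; apply/fsetP => x; rewrite !inE; apply/negbTE/negP => /andP [x1 x2].
by have := in_fset0 x; rewrite -Z12 inE (fsubsetP YZ1 _ x1) (fsubsetP YZ2 _ x2).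
Qed.

Lemma sums_above_witness X n L :
  0 < #|` [fset b in sums_upto X n | L < b]| -> L < fsum X /\ L < n.
Proof.
rewrite cardfs_gt0 => /fset0Pn [b]; rewrite inE => /andP [bS Lb].
by split; apply: leq_trans Lb _; [apply: sums_upto_le_fsum bS | apply: sums_upto_le bS].
Qed.

Lemma card_split_at (A : {fset nat}) L :
  #|` [fset x in A | x <= L]| + #|` [fset x in A | L < x]| = #|` A|.
Proof.
rewrite -cardfsUI (_ : _ `&` _ = fset0); last first.
  by apply/fsetP => x; rewrite !inE; case: leqP; rewrite ?andbF ?andbT.
rewrite cardfs0 addn0; congr #|` _|; apply/fsetP => x; rewrite !inE.
by case: leqP; rewrite ?andbT ?andbF ?orbF.
Qed.

Lemma card_translate (A : {fset nat}) s : #|` [fset a + s | a in A]| = #|` A|.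
Proof. by rewrite card_in_imfset //= => x y _ _; apply: addIn. Qed.

End SubsetSums.

Section CountingBounds.
Local Open Scope fset_scope.
Local Open Scope nat_scope.
Context {Z1 Z2 : {fset nat}} {u n : nat}.
Hypotheses (Z12 : Z1 `&` Z2 = fset0) (n_le_u : n <= u).

Local Notation A := (sums_upto Z1 n).
Local Notation B := (sums_upto Z2 n).
Local Notation C := (sums_upto (Z1 `|` Z2) u).
Local Notation L := (u - n).

Lemma A_sub_C : A `<=` C.
Proof. exact: sums_upto_sub (fsubsetUl _ _) n_le_u. Qed.

(* Bound (1): C contains A and the translate of B_{<=L} by a = max A; the two
   meet at most in a, since the translate lies at or above a. *)
Lemma card_sums_top :
  #|` A| + #|` B| <= #|` C| + 1 + #|` [fset b in B | L < b]|.
Proof.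
have [a aA amax] := ex_maxnP (ex_intro (fun c => c \in A) 0 (sums_upto0 Z1 n))
                              (fun c => @sums_upto_le Z1 n c).
set BL := [fset b in B | b <= L].
set aBL := [fset b + a | b in BL].
have aBL_sub_C : A `|` aBL `<=` C.
  rewrite fsubUset A_sub_C /=; apply/fsubsetP => _ /imfsetP [b /= bBL ->].
  move: bBL; rewrite inE => /andP [/sums_uptoP [Y2 [YZ2 <- _]] bL].
  case/sums_uptoP: aA => Y1 [YZ1 Ya an]; rewrite addnC -Ya.
  by apply: sums_upto_merge => //; rewrite Ya; lia.
have meet_le1 : #|` A `&` aBL| <= 1.
  rewrite -(cardfs1 a); apply: fsubset_leq_card; apply/fsubsetP => c.
  rewrite inE => /andP [cA /imfsetP [b _ cE]].
  by have := amax _ cA; rewrite inE cE /=; lia.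
have := fsubset_leq_card aBL_sub_C; rewrite cardfsU card_translate.
by have := card_split_at B L; rewrite -/BL; lia.
Qed.

(* Bound (2): with s a subset sum of Z2 in [L+1-m, L], C contains B and A+s;
   a common element a+s lies in B, hence a <= n - s < n + m - L. *)
Lemma card_sums_shift {m} : 0 < m -> (forall x, x \in Z2 -> x <= m) ->
  m <= L + 1 -> L + 1 - m <= fsum Z2 ->
  #|` A| + #|` B| <= #|` C| + #|` [fset a in A | a < n + m - L]|.
Proof.
move=> m_gt0 Z2m mL sumZ2.
have [Y2 YZ2 Y2win] := subset_sum_window m_gt0 Z2m sumZ2.
set s := fsum Y2 in Y2win.
have sub_C : B `|` [fset a + s | a in A] `<=` C.
  rewrite fsubUset (sums_upto_sub (fsubsetUr _ _) n_le_u) /=.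
  apply/fsubsetP => _ /imfsetP [a /= /sums_uptoP [Y1 [YZ1 <- an]] ->].
  by apply: sums_upto_merge => //; lia.
have meet_low : B `&` [fset a + s | a in A]
                `<=` [fset a + s | a in [fset a in A | a < n + m - L]].
  apply/fsubsetP => c; rewrite inE => /andP [cB /imfsetP [a /= aA cE]].
  apply/imfsetP; exists a => //=; rewrite !inE /= aA /=.
  by have := sums_upto_le cB; rewrite cE; lia.
have := fsubset_leq_card sub_C; have := fsubset_leq_card meet_low.
by rewrite cardfsU !card_translate; lia.
Qed.

(* Windows of width D = y + m - 1: for k D <= L + 1, the windows
   [jD, (j+1)D), j < k, each contain a translate of A_{<y} inside C. *)
Lemma card_sums_windows {m y k} : 0 < m -> 0 < y ->
  (forall x, x \in Z2 -> x <= m) -> L < fsum Z2 -> k * (y + m - 1) <= L + 1 ->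
  k * #|` [fset a in A | a < y]| <= #|` [fset c in C | c < k * (y + m - 1)]|.
Proof.
move=> m_gt0 y_gt0 Z2m LZ2; set D := y + m - 1; set Ay := [fset a in A | a < y].
elim: k => [|k IH]; first by rewrite mul0n.
rewrite !mulSn => kD.
have kD_sum : k * D <= fsum Z2 by rewrite /D in kD *; lia.
have [Y2 YZ2 Y2win] := subset_sum_window m_gt0 Z2m kD_sum.
set s := fsum Y2 in Y2win.
have sub_window : [fset c in C | c < k * D] `|` [fset a + s | a in Ay]
                  `<=` [fset c in C | c < D + k * D].
  apply/fsubsetP => c; rewrite inE => /orP [|/imfsetP [a /= aAy ->]].
    by rewrite !inE => /andP [-> ckD]; lia.
  move: aAy; rewrite inE => /andP [/sums_uptoP [Y1 [YZ1 <- _]] ay].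
  rewrite /D in kD *; rewrite !inE; apply/andP; split; last by lia.
  by apply: sums_upto_merge => //; lia.
have disj : [fset c in C | c < k * D] `&` [fset a + s | a in Ay] = fset0.
  apply/fsetP => c; rewrite !inE; apply/negbTE/negP => /andP [/andP [_ ckD]].
  by case/imfsetP => a _ cE; move: ckD; rewrite cE /=; lia.
have := fsubset_leq_card sub_window; rewrite cardfsU disj cardfs0 subn0.
by rewrite card_translate; have := IH (leq_trans (leq_addl _ _) kD); lia.
Qed.

(* Bound (3): the k windows lie below L + 1, and A_{>L} sits inside C above
   them. *)
Lemma card_sums_stack {m y k} : 0 < m -> 0 < y ->
  (forall x, x \in Z2 -> x <= m) -> L < fsum Z2 -> k * (y + m - 1) <= L + 1 ->
  k * #|` [fset a in A | a < y]| + #|` [fset a in A | L < a]| <= #|` C|.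
Proof.
move=> m_gt0 y_gt0 Z2m LZ2 kD.
have windows := card_sums_windows m_gt0 y_gt0 Z2m LZ2 kD.
set F := [fset c in C | c < k * (y + m - 1)] in windows.
have top_sub_C : [fset a in A | L < a] `<=` C.
  by apply/fsubsetP => a; rewrite inE => /andP [aA _]; apply: (fsubsetP A_sub_C).
have disj : F `&` [fset a in A | L < a] = fset0.
  apply/fsetP => c; rewrite !inE; apply/negbTE/negP.
  by move=> /andP [/andP [_ ?] /andP [_ ?]]; lia.
have : F `|` [fset a in A | L < a] `<=` C.
  by rewrite fsubUset top_sub_C andbT; apply/fsubsetP => c; rewrite inE => /andP [].
by move/fsubset_leq_card; rewrite cardfsU disj cardfs0 subn0; lia.
Qed.

End CountingBounds.

Local Open Scope ring_scope.

Lemma nat_floor_exists (R : realFieldType) (t : R) (N : nat) : 0 <= t -> t < N%:R ->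
  exists n : nat, n%:R <= t /\ forall k : nat, (k%:R <= t) = (k <= n)%N.
Proof.
move=> t_ge0; elim: N => [|N IH] tN; first by move: (le_lt_trans t_ge0 tN); rewrite ltxx.
case: (ltP t N%:R) => [/IH //|Nt]; exists N; split => // k.
apply/idP/idP => [kt|kN]; last by apply: le_trans Nt; rewrite ler_nat.
by rewrite -ltnS -(ltr_nat R); apply: le_lt_trans kt tN.
Qed.

Lemma subset_sums_nat {R : realFieldType} {X : {fset nat}} {t : R} {n : nat} :
  (forall k : nat, (k%:R <= t) = (k <= n)%N) -> subset_sums X t = sums_upto X n.
Proof.
move=> tn; apply/fsetP => s; rewrite /subset_sums /sums_upto.
apply/imfsetP/imfsetP => -[Y /=]; rewrite !inE => /andP [YX Yt] ->.
  by exists Y => //=; rewrite !inE YX -tn.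
by exists Y => //=; rewrite !inE YX tn.
Qed.

Lemma leq_fmax (Z : {fset nat}) z : z \in Z -> (z <= fmax Z)%N.
Proof. by move=> zZ; apply: (@leq_bigmax_seq _ _ xpredT id z). Qed.

Lemma close_by_slack {R : realFieldType} {eps mu N c x : R} :
  N <= c + 1 + x -> x <= (2 * eps + 4 * mu) * N -> N * (1 - 2 * eps - 4 * mu) <= c + 1.
Proof. by move=> ? ?; lra. Qed.

Lemma threshold_le_total {R : realFieldType} {u n : nat} {eps : R} :
  eps <= 1 / 4 -> n%:R <= (1 + eps) * u%:R / 2 -> (n <= u)%N.
Proof.
move=> eps_le n_le; have u_ge0 : 0 <= u%:R :> R := ler0n _ _.
have := ler_wpM2r u_ge0 eps_le; rewrite -(ler_nat R); lra.
Qed.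

Lemma max_le_room {R : realFieldType} {u n m : nat} {eps mu : R} :
  eps <= 1 / 4 -> mu <= 1 / 16 -> mu * u%:R = m%:R ->
  n%:R <= (1 + eps) * u%:R / 2 -> (m <= u - n + 1)%N.
Proof.
move=> eps_le mu_le mu_u n_le; have u_ge0 : 0 <= u%:R :> R := ler0n _ _.
have n_le_u := threshold_le_total eps_le n_le.
rewrite -(ler_nat R) natrD natrB //.
have := ler_wpM2r u_ge0 eps_le; have := ler_wpM2r u_ge0 mu_le; lra.
Qed.

(* With D = 2n + 2m - u - 1 < (eps + 2 mu) u and L + 1 >= (1 - eps) u / 2, a
   stack of k+1 windows of width D covering L + 1 has (k+1) delta >= 1 - eps,
   where delta = 2 eps + 4 mu. *)
Lemma stack_height {R : realFieldType} {u n m k D : nat} {eps mu : R} :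
  (0 < u)%N -> mu * u%:R = m%:R -> n%:R <= (1 + eps) * u%:R / 2 -> (n <= u)%N ->
  (u - n + 1 < k.+1 * D)%N -> (D + u + 1 = 2 * n + 2 * m)%N ->
  1 - eps <= k.+1%:R * (2 * eps + 4 * mu).
Proof.
move=> u_gt0 mu_u n_le n_le_u LkD.
have : (u - n + 1)%:R < (k.+1 * D)%:R :> R by rewrite ltr_nat.
rewrite natrM natrD natrB // {LkD} => LkD.
move/(congr1 (fun x : nat => x%:R : R)) => /=; rewrite !natrD ?natrM => DE.
have stack_le : k.+1%:R * D%:R <= k.+1%:R * (eps * u%:R + 2 * m%:R) :> R.
  by apply: ler_wpM2l => //; lra.
rewrite -(ler_pM2r (_ : 0 < u%:R :> R)) ?ltr0n //.
have -> : k.+1%:R * (2 * eps + 4 * mu) * u%:R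
          = 2 * (k.+1%:R * (eps * u%:R + 2 * m%:R)) by rewrite -mu_u; ring.
lra.
Qed.

(* When both tails of bound (1) are large, Z2 has sums above L (so L < n and
   m > 0), and either bound (2) or bound (3) closes the inequality. *)
Lemma tradeoff_heavy {R : realFieldType} {Z1 Z2 : {fset nat}} {u n m : nat} {eps mu : R} :
  (Z1 `&` Z2 = fset0)%fset -> (forall x, x \in Z2 -> (x <= m)%N) ->
  (0 < u)%N -> mu * u%:R = m%:R -> mu <= 1 / 16 -> 0 <= eps -> eps <= 1 / 4 ->
  n%:R <= (1 + eps) * u%:R / 2 -> (u - n < fsum Z2)%N -> (u - n < n)%N ->
  (2 * eps + 4 * mu) * ((#|` sums_upto Z1 n|%fset)%:R + (#|` sums_upto Z2 n|%fset)%:R)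
    < (#|` [fset a in sums_upto Z1 n | (u - n < a)%N]|%fset)%:R ->
  ((#|` sums_upto Z1 n|%fset)%:R + (#|` sums_upto Z2 n|%fset)%:R) * (1 - 2 * eps - 4 * mu)
  <= (#|` sums_upto (Z1 `|` Z2) u|%fset)%:R + 1.
Proof.
move=> Z12 Z2m u_gt0 mu_u mu_le eps_ge0 eps_le n_le LZ2 Ln.
set N := ((#|` sums_upto Z1 n|%fset)%:R + _ : R) => ah_large.
have n_le_u := threshold_le_total eps_le n_le.
have m_gt0 : (0 < m)%N by apply: bound_gt0_of_fsum Z2m _; lia.
have mu_ge0 : 0 <= mu by rewrite -(pmulr_lge0 _ (_ : 0 < u%:R :> R)) ?mu_u ?ltr0n.
have N_ge0 : 0 <= N by rewrite addr_ge0.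
have low_sum : (u - n + 1 - m <= fsum Z2)%N by lia.
have := card_sums_shift Z12 n_le_u m_gt0 Z2m (max_le_room eps_le mu_le mu_u n_le) low_sum.
rewrite -(ler_nat R) !natrD -/N.
set tau := (#|` [fset a in _ | (a < n + m - (u - n))%N]|%fset)%:R => shift.
have [tau_small|tau_large] := lerP tau ((2 * eps + 4 * mu) * N + 1).
  by apply: (@close_by_slack _ eps mu _ _ (tau - 1)); lra.
set y := (n + m - (u - n))%N; set D := (y + m - 1)%N.
have y_gt0 : (0 < y)%N by rewrite /y; lia.
have D_gt0 : (0 < D)%N by rewrite /D; lia.
have DE : (D + u + 1 = 2 * n + 2 * m)%N by rewrite /D /y; lia.
have := card_sums_stack Z12 n_le_u m_gt0 y_gt0 Z2m LZ2 (leq_trunc_div (u - n + 1) D).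
rewrite -(ler_nat R) natrD natrM -/tau; set k := ((u - n + 1) %/ D)%N => stack.
have height := stack_height u_gt0 mu_u n_le n_le_u (ltn_ceil _ D_gt0) DE.
have : k%:R * ((2 * eps + 4 * mu) * N) <= k%:R * tau.
  by apply: ler_wpM2l; [exact: ler0n | lra].
have : N * (1 - eps) <= N * (k.+1%:R * (2 * eps + 4 * mu)) by apply: ler_wpM2l.
have : 0 <= N * (eps + 4 * mu) by rewrite mulr_ge0 // addr_ge0 // mulr_ge0.
rewrite -addn1 natrD; lra.
Qed.

Lemma tradeoff {R : realFieldType} {Z1 Z2 : {fset nat}} {u n m : nat} {eps mu : R} :
  (Z1 `&` Z2 = fset0)%fset -> (forall z, z \in (Z1 `|` Z2)%fset -> (z <= m)%N) ->
  (0 < u)%N -> mu * u%:R = m%:R -> mu <= 1 / 16 -> 0 <= eps -> eps <= 1 / 4 ->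
  n%:R <= (1 + eps) * u%:R / 2 ->
  ((#|` sums_upto Z1 n|%fset)%:R + (#|` sums_upto Z2 n|%fset)%:R) * (1 - 2 * eps - 4 * mu)
  <= (#|` sums_upto (Z1 `|` Z2) u|%fset)%:R + 1.
Proof.
move=> Z12 Zm u_gt0 mu_u mu_le eps_ge0 eps_le n_le.
have n_le_u := threshold_le_total eps_le n_le.
have mu_ge0 : 0 <= mu by rewrite -(pmulr_lge0 _ (_ : 0 < u%:R :> R)) ?mu_u ?ltr0n.
have Z2m x : x \in Z2 -> (x <= m)%N by move=> xZ2; apply: Zm; rewrite inE xZ2 orbT.
have := card_sums_top Z12 n_le_u; rewrite -(ler_nat R) !natrD => top_B.
have [bh_small|bh_large] := lerP (#|` [fset b in sums_upto Z2 n | (u - n < b)%N]|%fset)%:R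
  ((2 * eps + 4 * mu) * ((#|` sums_upto Z1 n|%fset)%:R + (#|` sums_upto Z2 n|%fset)%:R)).
  exact: close_by_slack top_B bh_small.
have := card_sums_top (etrans (fsetIC _ _) Z12) n_le_u.
rewrite fsetUC -(ler_nat R) !natrD => top_A.
have [ah_small|ah_large] := lerP (#|` [fset a in sums_upto Z1 n | (u - n < a)%N]|%fset)%:R
  ((2 * eps + 4 * mu) * ((#|` sums_upto Z1 n|%fset)%:R + (#|` sums_upto Z2 n|%fset)%:R)).
  by apply: (close_by_slack _ ah_small); lra.
have [LZ2 Ln] : (u - n < fsum Z2)%N /\ (u - n < n)%N.
  apply: sums_above_witness; rewrite -(ltr0n R); apply: le_lt_trans bh_large.
  by rewrite mulr_ge0 ?addr_ge0 ?mulr_ge0.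
exact: tradeoff_heavy Z12 Z2m u_gt0 mu_u mu_le eps_ge0 eps_le n_le LZ2 Ln ah_large.
Qed.

Theorem mainTheorem6 (R : realFieldType) (u : nat) (Z Z1 Z2 : {fset nat}) (eps : R) :
  (1 <= u)%N ->
  (forall z, z \in Z -> (z <= u)%N) ->
  Z = (Z1 `|` Z2)%fset ->
  (Z1 `&` Z2 = fset0)%fset ->
  let mu : R := (fmax Z)%:R / u%:R in
  mu <= 1 / 16 ->
  0 <= eps -> eps <= 1 / 4 ->
  let t : R := (1 + eps) * u%:R / 2 in
  (#|` subset_sums Z1 t|%fset)%:R + (#|` subset_sums Z2 t|%fset)%:R
  <= ((#|` subset_sums Z (u%:R : R)|%fset)%:R + 1) / (1 - 2 * eps - 4 * mu).
Proof.
move=> u_gt0 _ ZE Z12 mu mu_le eps_ge0 eps_le; cbv zeta.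
set t := (1 + eps) * u%:R / 2.
have u_gt0R : 0 < u%:R :> R by rewrite ltr0n.
have mu_u : mu * u%:R = (fmax Z)%:R by rewrite /mu divfK ?gt_eqF.
have [n [n_le floor_n]] :
    exists n : nat, n%:R <= t /\ forall k : nat, (k%:R <= t) = (k <= n)%N.
  apply: (@nat_floor_exists R t (u + 1)); rewrite /t ?natrD;
  by have := mulr_ge0 eps_ge0 (ltW u_gt0R); have := ler_wpM2r (ltW u_gt0R) eps_le; lra.
rewrite !(subset_sums_nat floor_n) (subset_sums_nat (fun k => ler_nat R k u)).
rewrite ler_pdivlMr; last by lra.
have Zm z : z \in (Z1 `|` Z2)%fset -> (z <= fmax Z)%N by rewrite -ZE; apply: leq_fmax.
by have := tradeoff Z12 Zm u_gt0 mu_u mu_le eps_ge0 eps_le n_le; rewrite -ZE.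
Qed.
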